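(* Let $G$ be a hybrid graph. If the density matrix $\rho(G)$ is separable and the partial transpose graph $G^\Gamma$ is a NOI-graph or a COI-graph, then $D(G)=D(G^\Gamma)$.
   Context: A hybrid graph $G=(V,E_L+E_Q)$ is a grid-labelled graph (vertices $(i,j)$ on a grid, vertex $(i,j)$ identified with $|ij\rangle\in\mathbb{C}^{m_1}\otimes\mathbb{C}^{m_2}$) with a set $E_L$ of $L$-edges and a set $E_Q$ of $Q$-edges; an $L$-edge $\{(i,j),(k,l)\}$ has state $\frac1{\sqrt2}(|ij\rangle-|kl\rangle)$, a $Q$-edge has state $\frac1{\sqrt2}(|ij\rangle+|kl\rangle)$. Its hybrid Laplacian is $\mathcal{L}(G)=L(S_l)+Q(S_q)$, where $S_l=(V,E_L)$, $S_q=(V,E_Q)$, $L=D-A$ is the signed and $Q=D+A$ the signless Laplacian; $\rho(G)$ is the normalized $\mathcal{L}(G)$, i.e. the equal mixture of all edge-state projectors. $D(G)$ is the diagonal matrix of vertex degrees counting edges of both types. The partial transpose graph $G^\Gamma$ has the same vertex set and contains the edge $\{(i,l),(k,j)\}$ of a given type iff $G$ contains the edge $\{(i,j),(k,l)\}$ of that type. $G$ is a NOI-graph if its $Q$-subgraph $S_q$ is bipartite and no vertex is incident to both a $Q$-edge and an $L$-edge. $G$ is a COI-graph if $S_q$ is bipartite with a bipartition $(P_1,P_2)$ of $V$ (every $Q$-edge joining $P_1$ to $P_2$) such that every $L$-edge joins two vertices in the same part. *)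

From HB Require Import structures.
From mathcomp Require Import all_boot all_order all_algebra all_field.
Set Implicit Arguments. Unset Strict Implicit. Unset Printing Implicit Defensive.
Import Order.TTheory GRing.Theory Num.Theory.
Local Open Scope ring_scope.

(* Grid vertex set: vertex (i,j) <-> |ij> in C^m1 (x) C^m2. *)
Definition vert (m1 m2 : nat) := ('I_m1 * 'I_m2)%type.

(* A hybrid graph is given by two edge relations eL (L-edges) and eQ
   (Q-edges) on the grid vertices; each must be symmetric and loopless
   (edges are unordered pairs of distinct vertices). *)
Definition simple_rel (T : finType) (e : rel T) : Prop :=
  (forall x y, e x y = e y x) /\ (forall x, e x x = false).

Definition hybrid_graph m1 m2 (eL eQ : rel (vert m1 m2)) : Prop :=
  simple_rel eL /\ simple_rel eQ.

Definition deg (T : finType) (e : rel T) (u : T) : nat := #|[set v | e u v]|.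

(* D(G): degree counting edges of both types (diagonal entries of D(G)) *)
Definition Ddeg m1 m2 (eL eQ : rel (vert m1 m2)) (u : vert m1 m2) : nat :=
  deg eL u + deg eQ u.

(* hybrid Laplacian  L(S_l) + Q(S_q) = D(G) - A(S_l) + A(S_q) *)
Definition hlap m1 m2 (eL eQ : rel (vert m1 m2)) (u v : vert m1 m2) : algC :=
  if u == v then (Ddeg eL eQ u)%:R
  else - (eL u v : nat)%:R + (eQ u v : nat)%:R.

Definition trace_fun (T : finType) (A : T -> T -> algC) : algC := \sum_u A u u.

(* rho(G): the normalized hybrid Laplacian (= equal mixture of the edge
   projectors). *)
Definition rhoG m1 m2 (eL eQ : rel (vert m1 m2)) (u v : vert m1 m2) : algC :=
  (trace_fun (hlap eL eQ))^-1 * hlap eL eQ u v.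

Definition psd n (A : 'M[algC]_n) : Prop :=
  forall x : 'cV[algC]_n, 0 <= ((map_mx Num.conj x)^T *m A *m x) 0 0.

Definition density n (A : 'M[algC]_n) : Prop := psd A /\ \tr A = 1.

Definition separable_state m1 m2 (rho : vert m1 m2 -> vert m1 m2 -> algC) : Prop :=
  exists (k : nat) (p : 'I_k -> algC) (rA : 'I_k -> 'M[algC]_m1)
         (rB : 'I_k -> 'M[algC]_m2),
    (forall i, 0 <= p i) /\ \sum_i p i = 1 /\
    (forall i, density (rA i) /\ density (rB i)) /\
    forall u v : vert m1 m2,
      rho u v = \sum_i p i * (rA i u.1 v.1 * rB i u.2 v.2).

Definition ptrans m1 m2 (e : rel (vert m1 m2)) : rel (vert m1 m2) :=
  fun x y => e (x.1, y.2) (y.1, x.2).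

Definition bipartite_by (T : finType) (f : T -> bool) (e : rel T) : Prop :=
  forall x y, e x y -> f x != f y.

Definition NOI m1 m2 (eL eQ : rel (vert m1 m2)) : Prop :=
  (exists f, bipartite_by f eQ) /\
  ~ exists u v w, eQ u v && eL u w.

Definition COI m1 m2 (eL eQ : rel (vert m1 m2)) : Prop :=
  exists f : vert m1 m2 -> bool,
    bipartite_by f eQ /\ forall x y, eL x y -> f x = f y.

(* Separability makes the partial transpose of rho(G) positive semidefinite,
   since it maps each product state rho_A (x) rho_B to rho_A (x) rho_B^T.
   Partial transposition permutes the ordered edges, so Delta := D(G) - D(G^Gamma)
   has trace zero, and rho(G)^Gamma = (L(G^Gamma) + Delta) / tr L(G) whenever G
   has an edge.  If G^Gamma is NOI or COI, the +-1 vector s of a suitable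
   bipartition lies in the kernel of L(G^Gamma), so the form of
   L(G^Gamma) + Delta vanishes at s; a null vector of a positive semidefinite
   form lies in its kernel, hence Delta s = 0 and Delta = 0. *)

From mathcomp Require Import all_boot all_order all_algebra all_field.
From mathcomp Require Import ring.
Set Implicit Arguments. Unset Strict Implicit. Unset Printing Implicit Defensive.
Import Order.TTheory GRing.Theory Num.Theory.
Local Open Scope ring_scope.

Section SesquilinearForms.
Variable C : numClosedFieldType.

Definition qform (T : finType) (M : T -> T -> C) (x : T -> C) : C :=
  \sum_a \sum_b (x a)^* * M a b * x b.

Definition form_psd (T : finType) (M : T -> T -> C) : Prop := forall x, 0 <= qform M x.

Definition delta (T : finType) (u v : T) : C := (u == v)%:R.

Lemma sum_delta (T : finType) (F : T -> C) u : \sum_v delta u v * F v = F u.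
Proof.
under eq_bigr => v _ do rewrite /delta mulr_natl mulrb eq_sym.
by rewrite -big_mkcond big_pred1_eq.
Qed.

Lemma sum_delta_r (T : finType) (F : T -> C) u : \sum_v F v * delta u v = F u.
Proof. by under eq_bigr => v _ do rewrite mulrC; rewrite sum_delta. Qed.

Lemma conj_delta (T : finType) (u v : T) : (delta u v)^* = delta u v.
Proof. exact: conjC_nat. Qed.

Lemma qformE (T : finType) (M : T -> T -> C) x :
  qform M x = \sum_a (x a)^* * \sum_b M a b * x b.
Proof.
by apply: eq_bigr => a _; rewrite big_distrr /=; apply: eq_bigr => b _; rewrite mulrA.
Qed.

Lemma qform_add_delta (T : finType) (M : T -> T -> C) (x : T -> C) (l t : C) (u : T) :
  qform M (fun v => l * x v + t * delta u v) =
  l^* * l * qform M x + l^* * t * (\sum_a (x a)^* * M a u)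
  + t^* * l * (\sum_b M u b * x b) + t^* * t * M u u.
Proof.
have row a : \sum_b M a b * (l * x b + t * delta u b) = l * (\sum_b M a b * x b) + t * M a u.
  under eq_bigr => b _ do rewrite mulrDr mulrCA [M a b * _]mulrCA.
  by rewrite big_split /= -!big_distrr /= sum_delta_r.
rewrite !qformE; under eq_bigr => a _ do rewrite row.
set Mx := fun a => \sum_b M a b * x b.
have -> : \sum_a (l * x a + t * delta u a)^* * (l * Mx a + t * M a u) =
    \sum_a (l^* * l * ((x a)^* * Mx a) + l^* * t * ((x a)^* * M a u))
    + t^* * \sum_a delta u a * (l * Mx a + t * M a u).
  rewrite big_distrr -big_split; apply: eq_bigr => a _ /=.
  by rewrite rmorphD !rmorphM /= conj_delta; ring.
by rewrite sum_delta big_split -!big_distrr /= /Mx; ring.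
Qed.

Lemma form_psd_ext (T : finType) (M N : T -> T -> C) :
  (forall a b, M a b = N a b) -> form_psd M -> form_psd N.
Proof.
move=> eMN psdM x; have := psdM x; rewrite /qform; congr (0 <= _).
by apply: eq_bigr => a _; apply: eq_bigr => b _; rewrite eMN.
Qed.

Lemma form_psd_scale (T : finType) (M : T -> T -> C) c :
  0 < c -> form_psd (fun a b => c * M a b) -> form_psd M.
Proof.
move=> c_gt0 psdcM x; rewrite -(pmulr_rge0 _ c_gt0); have := psdcM x.
rewrite /qform big_distrr /=; congr (0 <= _).
by apply: eq_bigr => a _; rewrite big_distrr /=; apply: eq_bigr => b _; ring.
Qed.

Lemma form_psd_sum (T I : finType) (p : I -> C) (M : I -> T -> T -> C) :
  (forall i, 0 <= p i) -> (forall i, form_psd (M i)) ->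
  form_psd (fun a b => \sum_i p i * M i a b).
Proof.
move=> p_ge0 psdM x.
have -> : qform (fun a b => \sum_i p i * M i a b) x = \sum_i p i * qform (M i) x.
  rewrite /qform; under eq_bigr => a _ do under eq_bigr => b _ do rewrite mulr_sumr mulr_suml.
  under eq_bigr => a _ do rewrite exchange_big.
  rewrite exchange_big; apply: eq_bigr => i _; rewrite mulr_sumr; apply: eq_bigr => a _.
  by rewrite mulr_sumr; apply: eq_bigr => b _ /=; ring.
by apply: sumr_ge0 => i _; apply: mulr_ge0; [exact: p_ge0 | exact: psdM].
Qed.

Lemma form_psd_tr (T : finType) (M : T -> T -> C) :
  form_psd M -> form_psd (fun a b => M b a).
Proof.
move=> psdM x; have := psdM (fun a => (x a)^*).
rewrite /qform exchange_big; congr (0 <= _); apply: eq_bigr => a _.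
by apply: eq_bigr => b _; rewrite !conjCK; ring.
Qed.

Lemma qform_delta (T : finType) (M : T -> T -> C) u : qform M (delta u) = M u u.
Proof.
rewrite qformE; under eq_bigr => a _ do rewrite sum_delta_r conj_delta.
exact: sum_delta.
Qed.

Lemma form_psd_diag_ge0 (T : finType) (M : T -> T -> C) u : form_psd M -> 0 <= M u u.
Proof. by move=> psdM; rewrite -qform_delta. Qed.

Lemma form_psd_herm (T : finType) (M : T -> T -> C) :
  form_psd M -> forall a b, M b a = (M a b)^*.
Proof.
move=> psdM a b.
pose P z := qform M (fun v => 1 * delta a v + z * delta b v).
have PE z : P z = M a a + z * M a b + z^* * M b a + z^* * z * M b b.
  rewrite /P qform_add_delta qform_delta sum_delta_r rmorph1 !mul1r mulr1.
  by under eq_bigr do rewrite conj_delta; rewrite sum_delta.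
have P_real z : (P z)^* = P z := geC0_conj (psdM _).
have [aa_real bb_real] := (geC0_conj (form_psd_diag_ge0 a psdM),
                           geC0_conj (form_psd_diag_ge0 b psdM)).
have key : 'i *+ 2 * ((M b a)^* - M a b) = 'i * ((P 1)^* - P 1) + ((P 'i)^* - P 'i).
  rewrite !PE !(rmorphD, rmorphM) /= !conjCK conjCi rmorph1 aa_real bb_real; ring.
rewrite !P_real !subrr mulr0 addr0 in key.
move/eqP: key; rewrite mulf_eq0 mulrn_eq0 (negbTE (neq0Ci _)) /= subr_eq0.
by move=> /eqP <-; rewrite conjCK.
Qed.

Lemma form_psd_kernel (T : finType) (M : T -> T -> C) s u :
  form_psd M -> qform M s = 0 -> \sum_b M u b * s b = 0.
Proof.
move=> psdM qs0; set r := \sum_b M u b * s b; set d := M u u.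
have d_ge0 : 0 <= d := form_psd_diag_ge0 u psdM.
have col : \sum_a (s a)^* * M a u = r^*.
  rewrite rmorph_sum; apply: eq_bigr => a _.
  by rewrite rmorphM /= -form_psd_herm // mulrC.
have := psdM (fun v => (d + 1) * s v + (- r) * delta u v).
have d1_real : (d + 1)^* = d + 1 by rewrite geC0_conj // addr_ge0.
rewrite qform_add_delta qs0 col -/r -/d rmorphN d1_real.
have -> : (d + 1) * (d + 1) * 0 + (d + 1) * - r * r^* + - r^* * (d + 1) * r + - r^* * - r * d
  = - ((d + 2) * (r * r^*)) by ring.
rewrite oppr_ge0 pmulr_rle0 ?ltr_wpDl // => rr_le0.
by apply/eqP; rewrite -mul_conjC_eq0 eq_le rr_le0 mul_conjC_ge0.
Qed.

Lemma form_psd_add_diag_eq0 (T : finType) (H : T -> T -> C) (D s : T -> C) :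
  form_psd (fun a b => H a b + delta a b * D a) ->
  (forall a, \sum_b H a b * s b = 0) -> (forall a, (s a)^* * s a = 1) ->
  \sum_a D a = 0 -> forall u, D u = 0.
Proof.
move=> psdM Hs s_unit D0 u.
have row a : \sum_b (H a b + delta a b * D a) * s b = D a * s a.
  under eq_bigr do rewrite mulrDl [_ * D a]mulrC -mulrA.
  by rewrite big_split /= Hs -big_distrr sum_delta add0r.
have qs0 : qform (fun a b => H a b + delta a b * D a) s = 0.
  by rewrite qformE; under eq_bigr do rewrite row mulrCA s_unit mulr1.
move: (form_psd_kernel u psdM qs0); rewrite row => /eqP.
rewrite mulf_eq0 => /orP [/eqP //| /eqP su0].
by move: (s_unit u); rewrite su0 mulr0 => /eqP; rewrite eq_sym oner_eq0.
Qed.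

Lemma form_psd_spectral n (B : 'I_n -> 'I_n -> C) : form_psd B ->
  exists (P : 'M[C]_n) (d : 'I_n -> C), (forall k, 0 <= d k) /\
    forall a c, B a c = \sum_k (P k a)^* * d k * P k c.
Proof.
move=> psdB; pose Bm := \matrix_(i, j) B i j.
have Bm_herm : Bm \is hermsymmx.
  rewrite is_hermitianmxE expr0 scale1r; apply/eqP/matrixP => i j.
  by rewrite !mxE form_psd_herm.
have /orthomx_spectralP BmE := hermitian_normalmx Bm_herm.
have P_unitary := spectral_unitarymx Bm.
rewrite invmx_unitary // in BmE.
set P := spectralmx Bm in BmE P_unitary; set D := spectral_diag Bm in BmE.
exists P, (fun k => D 0 k); split => [k|a c]; last first.
  have /matrixP/(_ a c) := BmE; rewrite mul_mx_diag !mxE => ->.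
  by apply: eq_bigr => k _; rewrite !mxE.
have /unitarymxP PPt := P_unitary.
have : (P *m Bm *m P^t* )%sesqui = diag_mx D.
  by rewrite BmE !mulmxA PPt mul1mx -mulmxA PPt mulmx1.
move/matrixP/(_ k k); rewrite !mxE eqxx mulr1n => <-.
have := psdB (fun c => (P k c)^*); congr (0 <= _).
rewrite /qform exchange_big; apply: eq_bigr => c _; rewrite !mxE big_distrl /=.
by apply: eq_bigr => a _; rewrite !mxE conjCK.
Qed.

Lemma sum_pair (I J : finType) (F : I * J -> C) :
  \sum_u F u = \sum_a \sum_b F (a, b).
Proof. by rewrite pair_bigA; apply: eq_bigr => -[]. Qed.

Lemma form_psd_tensor (T : finType) n (A : T -> T -> C) (B : 'I_n -> 'I_n -> C) :
  form_psd A -> form_psd B -> form_psd (fun u v : T * 'I_n => A u.1 v.1 * B u.2 v.2).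
Proof.
move=> psdA /form_psd_spectral [P [d [d_ge0 BE]]] x.
pose z k a := \sum_b x (a, b) * P k b.
suff -> : qform (fun u v : T * 'I_n => A u.1 v.1 * B u.2 v.2) x = \sum_k d k * qform A (z k).
  by apply: sumr_ge0 => k _; apply: mulr_ge0.
pose F k a b c e := d k * ((x (a, b))^* * (P k b)^*) * A a c * (x (c, e) * P k e).
transitivity (\sum_a \sum_b \sum_c \sum_e \sum_k F k a b c e).
  rewrite /qform sum_pair; apply: eq_bigr => a _; apply: eq_bigr => b _.
  rewrite sum_pair; apply: eq_bigr => c _; apply: eq_bigr => e _ /=.
  by rewrite BE !mulr_sumr mulr_suml; apply: eq_bigr => k _; rewrite /F; ring.
symmetry; transitivity (\sum_k \sum_a \sum_c \sum_b \sum_e F k a b c e).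
  apply: eq_bigr => k _; rewrite /qform mulr_sumr; apply: eq_bigr => a _.
  rewrite mulr_sumr; apply: eq_bigr => c _; rewrite /z rmorph_sum /= !mulr_suml !mulr_sumr.
  apply: eq_bigr => b _; rewrite !mulr_sumr; apply: eq_bigr => e _.
  by rewrite /F rmorphM /=; ring.
rewrite [LHS]exchange_big; apply: eq_bigr => a _.
rewrite [LHS]exchange_big [RHS]exchange_big; apply: eq_bigr => c _.
by rewrite [LHS]exchange_big; apply: eq_bigr => b _; rewrite [LHS]exchange_big.
Qed.

End SesquilinearForms.

Arguments delta {C T} u v.

Lemma psd_form_psd n (A : 'M[algC]_n) : psd A -> form_psd (fun i j => A i j).
Proof.
move=> psdA z; have := psdA (\col_i z i); rewrite !mxE.
under eq_bigr => c _ do rewrite !mxE big_distrl /=.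
rewrite exchange_big /=; congr (_ <= _); apply: eq_bigr => a _; apply: eq_bigr => c _.
by rewrite !mxE.
Qed.

Lemma separable_ptrans_form_psd m1 m2 (rho : vert m1 m2 -> vert m1 m2 -> algC) :
  separable_state rho -> form_psd (fun u v : vert m1 m2 => rho (u.1, v.2) (v.1, u.2)).
Proof.
case=> k [p [rA [rB [p_ge0 [_ [dens rhoE]]]]]].
apply: (@form_psd_ext _ _ (fun u v => \sum_i p i * (rA i u.1 v.1 * rB i v.2 u.2))).
  by move=> u v; rewrite rhoE.
apply: form_psd_sum => // i; apply: (@form_psd_tensor _ _ _ _ (fun a b => rB i b a)).
  exact: psd_form_psd (dens i).1.1.
exact/form_psd_tr/psd_form_psd/(dens i).2.1.
Qed.

Lemma ptrans_sym m1 m2 (e : rel (vert m1 m2)) : symmetric e -> symmetric (ptrans e).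
Proof. by move=> e_sym x y; rewrite /ptrans e_sym. Qed.

Lemma ptrans_irr m1 m2 (e : rel (vert m1 m2)) : irreflexive e -> irreflexive (ptrans e).
Proof. by move=> e_irr [a b]; rewrite /ptrans e_irr. Qed.

Lemma NOI_COI m1 m2 (eL eQ : rel (vert m1 m2)) :
  symmetric eL -> symmetric eQ -> NOI eL eQ -> COI eL eQ.
Proof.
move=> L_sym Q_sym [[f f_bip] no_incid].
have L_free x y : eQ x y -> ~~ [exists w, eL x w].
  by move=> Qxy; apply/existsP => -[w Lxw]; apply: no_incid; exists x, y, w; rewrite Qxy.
exists (fun x => [exists w, eL x w] || f x); split.
  move=> x y Qxy; rewrite (negbTE (L_free x y Qxy)).
  by rewrite Q_sym in Qxy; rewrite (negbTE (L_free y x Qxy)) /=; apply: f_bip; rewrite Q_sym.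
move=> x y Lxy; have Lx : [exists w, eL x w] by apply/existsP; exists y.
have Ly : [exists w, eL y w] by apply/existsP; exists x; rewrite L_sym.
by rewrite Lx Ly.
Qed.

Lemma degE (T : finType) (e : rel T) u : deg e u = (\sum_v e u v)%N.
Proof.
rewrite /deg -sum1_card big_mkcond /=; apply: eq_bigr => v _.
by rewrite inE; case: (e u v).
Qed.

Lemma sum_deg_ptrans m1 m2 (e : rel (vert m1 m2)) :
  (\sum_u deg (ptrans e) u = \sum_u deg e u)%N.
Proof.
pose swap (p : vert m1 m2 * vert m1 m2) := ((p.1.1, p.2.2), (p.2.1, p.1.2)).
have swapK : involutive swap by case=> [[a b] [c d]].
under eq_bigr do rewrite degE; under [RHS]eq_bigr do rewrite degE.
rewrite !pair_bigA (reindex_inj (inv_inj swapK)) /=.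
by apply: eq_bigr => -[[a b] [c d]].
Qed.

Lemma sum_Ddeg_ptrans m1 m2 (eL eQ : rel (vert m1 m2)) :
  (\sum_u Ddeg (ptrans eL) (ptrans eQ) u = \sum_u Ddeg eL eQ u)%N.
Proof. by rewrite !big_split /= !sum_deg_ptrans. Qed.

Lemma trace_hlap m1 m2 (eL eQ : rel (vert m1 m2)) :
  trace_fun (hlap eL eQ) = (\sum_u Ddeg eL eQ u)%:R.
Proof. by rewrite natr_sum; apply: eq_bigr => u _; rewrite /hlap eqxx. Qed.

Lemma hlap_ptrans m1 m2 (eL eQ : rel (vert m1 m2)) u v :
  hlap eL eQ (u.1, v.2) (v.1, u.2) = hlap (ptrans eL) (ptrans eQ) u v
    + delta u v * ((Ddeg eL eQ u)%:R - (Ddeg (ptrans eL) (ptrans eQ) u)%:R).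
Proof.
rewrite /hlap /delta; have [<-|neq_uv] := eqVneq u v.
  by rewrite -surjective_pairing eqxx mul1r addrC subrK.
have -> : ((u.1, v.2) == (v.1, u.2)) = false.
  apply: contraNF neq_uv => /eqP [eq1 eq2]; apply/eqP.
  by case: u v eq1 eq2 => [a b] [c d] /= -> ->.
by rewrite mul0r addr0.
Qed.

Lemma hlap_sign_kernel m1 m2 (eL eQ : rel (vert m1 m2)) (g : vert m1 m2 -> bool) u :
  irreflexive eL -> irreflexive eQ -> bipartite_by g eQ ->
  (forall x y, eL x y -> g x = g y) ->
  \sum_v hlap eL eQ u v * (-1) ^+ g v = 0.
Proof.
move=> L_irr Q_irr Q_bip L_same.
have term v : hlap eL eQ u v * (-1) ^+ g v =
    delta u v * ((Ddeg eL eQ u)%:R * (-1) ^+ g u)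
    - (-1) ^+ g u * ((eL u v : nat)%:R + (eQ u v : nat)%:R).
  rewrite /hlap /delta; have [<-|neq_uv] := eqVneq u v.
    by rewrite L_irr Q_irr mul1r addr0 mulr0 subr0.
  move: (L_same u v) (Q_bip u v).
  case: (eL u v); case: (eQ u v) => /= Lg Qg.
  - by move: (Qg erefl); rewrite (Lg erefl) eqxx.
  - by rewrite (Lg erefl); ring.
  - by move: (Qg erefl); case: (g u); case: (g v) => //= _; ring.
  - by ring.
under eq_bigr do rewrite term.
rewrite sumrB sum_delta -mulr_sumr big_split /= -!natr_sum -!degE /Ddeg natrD.
by rewrite mulrC subrr.
Qed.

Theorem theorem3 (m1 m2 : nat) (eL eQ : rel (vert m1 m2)) :
  hybrid_graph eL eQ ->
  separable_state (rhoG eL eQ) ->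
  (NOI (ptrans eL) (ptrans eQ) \/ COI (ptrans eL) (ptrans eQ)) ->
  forall u : vert m1 m2, Ddeg eL eQ u = Ddeg (ptrans eL) (ptrans eQ) u.
Proof.
move=> [[L_sym L_irr] [Q_sym Q_irr]] sep graphG u.
have [g [Q_bip L_same]] : COI (ptrans eL) (ptrans eQ).
  by case: graphG => //; apply: NOI_COI; apply: ptrans_sym.
pose D v : algC := (Ddeg eL eQ v)%:R - (Ddeg (ptrans eL) (ptrans eQ) v)%:R.
suff : D u = 0 by move/eqP; rewrite subr_eq0 eqr_nat => /eqP.
have [tr0|tr_gt0] := posnP (\sum_v Ddeg eL eQ v).
  have Ddeg0 e1 e2 : (\sum_v Ddeg e1 e2 v = 0 -> Ddeg e1 e2 u = 0)%N.
    by move/eqP; rewrite sum_nat_eq0 => /forallP/(_ u)/eqP.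
  by rewrite /D !Ddeg0 ?sum_Ddeg_ptrans ?subrr.
apply: (@form_psd_add_diag_eq0 _ _ (hlap (ptrans eL) (ptrans eQ)) D (fun v => (-1) ^+ g v)).
- apply: (@form_psd_scale _ _ _ (trace_fun (hlap eL eQ))^-1).
    by rewrite invr_gt0 trace_hlap ltr0n.
  apply: form_psd_ext (separable_ptrans_form_psd sep) => v w.
  by rewrite /rhoG hlap_ptrans.
- by move=> v; apply: hlap_sign_kernel => //; apply: ptrans_irr.
- by move=> v; rewrite rmorph_sign -expr2 sqrr_sign.
- by rewrite sumrB -!natr_sum sum_Ddeg_ptrans subrr.
Qed.
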